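(* Let $t$ be a positive integer and let $G$ be a finite graph of NLC-width at most $t$. Then the 2VC-dimension of the hypergraph of balls in $G$ is at most $6t+2$.
   Context: The hypergraph of balls in $G$ has vertex set $V(G)$ and hyperedges all $B_G(c,r)=\{v:\mathrm{dist}_G(c,v)\le r\}$ for $c\in V(G)$ and integers $r$. A set $S\subseteq V(H)$ is 2-shattered by a hypergraph $H$ if for all distinct $s_1,s_2\in S$ there is $e\in E(H)$ with $e\cap S=\{s_1,s_2\}$; the 2VC-dimension of $H$ is the maximum size of a 2-shattered set. An NLC-decomposition of $G$ is a tuple $(T,Q,\alpha,\beta,R)$ where $T$ is a rooted binary tree (each node has at most one left and at most one right child) with leaf set $V(G)$, $Q$ is a finite label set, $\alpha:V(G)\to Q$, $\beta$ assigns to each 2-element subset of $V(T)$ a map $Q\to Q$, and $R$ assigns to each node a subset of $Q\times Q$, such that: (nlc1) if $u$ is an ancestor of $v\ne u$ and $u=u_0,\dots,u_n=v$ is the path between them, then $\beta(\{u_0,u_1\})\circ\cdots\circ\beta(\{u_{n-1},u_n\})=\beta(\{u,v\})$; (nlc2) for distinct $x,y\in V(G)$ with lowest common ancestor $u$, $x$ a descendant of the left child and $y$ of the right child of $u$, $xy\in E(G)$ iff $(\beta(\{u,x\})(\alpha(x)),\beta(\{u,y\})(\alpha(y)))\in R(u)$. The NLC-width of $G$ is the minimum $|Q|$ over NLC-decompositions of $G$. *)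

From mathcomp Require Import all_boot all_order all_algebra.
Set Implicit Arguments. Unset Strict Implicit. Unset Printing Implicit Defensive.
Import Order.TTheory GRing.Theory Num.Theory.

(* A finite simple graph is a symmetric irreflexive relation e on a finType T.
   dist_G(c,v) <= r  iff there is a walk from c to v with at most r edges
   (dist = +infinity when no walk exists, so v is then in no ball around c).
   Radii r range over the integers (negative radii give the empty ball). *)
Definition in_ball (T : finType) (e : rel T) (c : T) (r : int) (v : T) : Prop :=
  exists p : seq T, [/\ path e c p, last c p = v & ((size p)%:Z <= r)%R].

Definition two_shattered (T : finType) (e : rel T) (S : {set T}) : Prop :=
  forall s1 s2, s1 \in S -> s2 \in S -> s1 != s2 ->
    exists (c : T) (r : int), forall v,
      (v \in S /\ in_ball e c r v) <-> (v = s1 \/ v = s2).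

Definition vc2dim_balls_le (T : finType) (e : rel T) (k : nat) : Prop :=
  forall S : {set T}, two_shattered e S -> #|S| <= k.

Fixpoint up (N : Type) (par : N -> option N) (v : N) (n : nat) : option N :=
  match n with
  | 0 => Some v
  | m.+1 => match par v with Some p => up par p m | None => None end
  end.

Definition ancestor (N : Type) (par : N -> option N) (u v : N) : Prop :=
  exists n, up par v n = Some u.

(* comp_up par beta v n = beta(u0,u1) o ... o beta(u_{n-1},u_n) where
   u_n = v and u_i = up par v (n - i)  (the path from the ancestor u0 down to v). *)
Fixpoint comp_up (N Q : Type) (par : N -> option N) (beta : N -> N -> Q -> Q)
    (v : N) (n : nat) : Q -> Q :=
  match n with
  | 0 => fun q => q
  | m.+1 => match par v with
            | Some p => fun q => comp_up par beta p m (beta p v q)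
            | None => fun q => q
            end
  end.

(* The tree has node set N, parent map par, and side a = false/true meaning that
   a is the left/right child of its parent.  leaf identifies V(G) with the leaf set.
   beta is indexed by (ordered) pairs but required symmetric, i.e. it is a function
   of the 2-element subset {u,v}. *)
Definition is_nlc_decomposition (V : finType) (e : rel V) (N Q : finType)
    (par : N -> option N) (side : N -> bool) (leaf : V -> N)
    (alpha : V -> Q) (beta : N -> N -> Q -> Q) (R : N -> Q -> Q -> bool) : Prop :=
  (forall a b, par a = None -> par b = None -> a = b) /\
  (forall v, exists n r, up par v n = Some r /\ par r = None) /\
  (forall a b p, par a = Some p -> par b = Some p -> side a = side b -> a = b) /\
  injective leaf /\
  (forall n, (forall c, par c <> Some n) <-> exists x, leaf x = n) /\
  (forall u v, beta u v = beta v u) /\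
  (forall u v n, 0 < n -> up par v n = Some u -> comp_up par beta v n = beta u v) /\
  (forall (x y : V) (u lx ry : N), x != y ->
     par lx = Some u -> side lx = false ->
     par ry = Some u -> side ry = true ->
     ancestor par lx (leaf x) -> ancestor par ry (leaf y) ->
     (e x y <-> R u (beta u (leaf x) (alpha x)) (beta u (leaf y) (alpha y)))).

Definition nlc_width_le (V : finType) (e : rel V) (t : nat) : Prop :=
  exists (N Q : finType) (par : N -> option N) (side : N -> bool) (leaf : V -> N)
         (alpha : V -> Q) (beta : N -> N -> Q -> Q) (R : N -> Q -> Q -> bool),
    #|Q| <= t /\ is_nlc_decomposition e par side leaf alpha beta R.

From mathcomp Require Import all_boot all_order all_algebra.
From mathcomp Require Import zify boolp.
Set Implicit Arguments. Unset Strict Implicit. Unset Printing Implicit Defensive.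

(* Fix a node u of the decomposition tree that is not a leaf, and let X be the set
   of vertices below u.  By (nlc1) and (nlc2), two vertices of X with the same label
   beta(u, x)(alpha x) have the same neighbours outside X.  Call x in S n X captured
   if some ball centred outside X meets S in {x, y} with y outside X; a walk of
   length at most r from the centre to x enters X through an edge whose endpoint in
   X has some label q.  If two captured vertices entered with the same label, the
   one with the shorter tail after the entry edge would also lie in the other's ball
   (swap the tails), so at most |Q| vertices of S n X are captured; symmetrically
   for S \ X.  A pair x in X, y outside X that is captured on neither side is cut
   out by no ball, hence |S n X| <= |Q| or |S \ X| <= |Q|.  Taking u lowest with
   |S n X| > t, each child carries at most t vertices of S, so |S| <= 3t. *)

Section RootedTree.
Variables (N : finType) (par : N -> option N).

Lemma up_addn v m n :
  up par v (m + n) = if up par v m is Some w then up par w n else None.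
Proof.
elim: m v => [|m IHm] v //=.
by case: (par v) => [p|] //; rewrite IHm.
Qed.

Lemma up_succ v n w :
  up par v n.+1 = Some w -> exists2 c, up par v n = Some c & par c = Some w.
Proof.
rewrite -addn1 up_addn; case: (up par v n) => [c|] //=.
by case hc: (par c) => [p|] //= [<-]; exists c.
Qed.

Lemma ancestor_trans u v w : ancestor par u v -> ancestor par v w -> ancestor par u w.
Proof. by move=> [m hm] [n hn]; exists (n + m); rewrite up_addn hn. Qed.

Lemma ancestor_parent c u v : par c = Some u -> ancestor par c v -> ancestor par u v.
Proof. by move=> hc; apply: ancestor_trans; exists 1; rewrite /= hc. Qed.

Lemma comp_up_addn (Q : Type) (beta : N -> N -> Q -> Q) v m n w q :
  up par v m = Some w ->
  comp_up par beta v (m + n) q = comp_up par beta w n (comp_up par beta v m q).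
Proof.
elim: m v q => [|m IHm] v q /=; first by case=> ->.
by case: (par v) => [p|] // /IHm.
Qed.

Hypothesis root_uniq : forall a b, par a = None -> par b = None -> a = b.
Hypothesis up_root : forall v, exists n r, up par v n = Some r /\ par r = None.

Lemma root_ancestor r v : par r = None -> ancestor par r v.
Proof.
by move=> hr; have [n [r' [hn hr']]] := up_root v; exists n; rewrite hn (root_uniq hr' hr).
Qed.

Lemma up_succ_neq u m : up par u m.+1 <> Some u.
Proof.
move=> hu; have [n [r [hn hr]]] := up_root u.
have : up par u (m.+1 + n) = up par u (n + m.+1) by rewrite addnC.
by rewrite !up_addn hu hn /= hr.
Qed.

Definition descendants u := [set v | `[< ancestor par u v >]].

Lemma descendants_child c u : par c = Some u -> descendants c \proper descendants u.
Proof.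
move=> hc; apply/properP; split.
  by apply/subsetP => v; rewrite !inE => /asboolP hv; apply/asboolP/(ancestor_parent hc).
exists u; rewrite !inE; first by apply/asboolP; exists 0.
apply/asboolP => -[n hn]; apply: (@up_succ_neq u n).
by rewrite -addn1 up_addn hn /= hc.
Qed.

Variable side : N -> bool.
Hypothesis binary : forall a b p, par a = Some p -> par b = Some p -> side a = side b -> a = b.

Lemma incomparable_children u v : ~ ancestor par u v -> ~ ancestor par v u ->
  exists w cu cv m, [/\ up par u m = Some cu, par cu = Some w, par cv = Some w,
                        ancestor par cv v & side cu != side cv].
Proof.
move=> huv hvu.
pose common n := `[< exists w, up par u n = Some w /\ ancestor par w v >].
have ex_common : exists n, common n.
  have [n [r [hn hr]]] := up_root u.
  by exists n; apply/asboolP; exists r; split; last exact: root_ancestor.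
case: (ex_minnP ex_common) => -[|m] /asboolP [w [hw hwv]] hmin.
  by case: hw => hw; case: huv; rewrite hw.
have [cu hcu hcuw] := up_succ hw.
have hcuv : ~ ancestor par cu v.
  by move=> hcuv; have := hmin m (asboolT (ex_intro _ cu (conj hcu hcuv))); rewrite ltnn.
case: hwv => -[|i] hi.
  by case: hi => hi; case: hvu; exists m.+1; rewrite hi.
have [cv hcv hcvw] := up_succ hi.
exists w, cu, cv, m; split => //; first by exists i.
by apply/eqP => hs; apply: hcuv; rewrite (binary hcuw hcvw hs); exists i.
Qed.
End RootedTree.

Section Walks.
Variables (V : finType) (e : rel V).

Definition walk (c v : V) (k : nat) : Prop :=
  exists p, [/\ path e c p, last c p = v & size p = k].

Lemma walk_cat c a a' x l d :
  walk c a l -> e a a' -> walk a' x d -> walk c x (l + 1 + d).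
Proof.
move=> [p [hp hpl hps]] haa' [q [hq hql hqs]]; exists (p ++ a' :: q); split.
- by rewrite cat_path hp hpl /= haa' hq.
- by rewrite last_cat.
- by rewrite size_cat /= hps hqs addn1 addSnnS.
Qed.

Lemma in_ball_walk c r v k : walk c v k -> (k%:Z <= r)%R -> in_ball e c r v.
Proof. by move=> [p [hp hpv hpk]] hk; exists p; rewrite hpk. Qed.

Lemma path_crossing (P : pred V) c p : ~~ P c -> path e c p -> P (last c p) ->
  exists a a' l d, [/\ ~~ P a, P a' & e a a'] /\
    [/\ walk c a l, walk a' (last c p) d & l + 1 + d = size p].
Proof.
elim: p c => [|b p IHp] c hc /=; first by move=> _ hc'; rewrite hc' in hc.
case/andP=> hcb hp hl; case hb: (P b).
  by exists c, b, 0, (size p); split; split => //; [exists [::] | exists p].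
have [a [a' [l [d [hcross [[q [hq hql hqs]] hw hs]]]]]] := IHp b (negbT hb) hp hl.
exists a, a', l.+1, d; split => //; split => //; last by rewrite -hs.
by exists (b :: q); rewrite /= hcb hq hqs.
Qed.

End Walks.

Section Capture.
Variables (V : finType) (e : rel V) (Q : finType) (S : {set V}) (P : pred V).
Variable lab : V -> V -> Q.
Hypothesis lab_exchange : forall a1 a1' a2 a2', ~~ P a1 -> P a1' -> ~~ P a2 -> P a2' ->
  e a1 a1' -> e a2 a2' -> lab a1 a1' = lab a2 a2' -> e a1 a2'.

Definition ball_picks c r x y := forall v, (v \in S /\ in_ball e c r v) <-> (v = x \/ v = y).

Definition captured x := exists y c r, [/\ y \in S, ~~ P y, ~~ P c & ball_picks c r x y].

Definition captured_via x q d := exists y c r a a' l,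
  [/\ y \in S, ~~ P y, ~~ P c & ball_picks c r x y] /\ [/\ ~~ P a, P a', e a a' & lab a a' = q] /\
  [/\ walk e c a l, walk e a' x d & ((l + 1 + d)%:Z <= r)%R].

Lemma captured_via_unique x1 x2 q d1 d2 : x2 \in S -> P x2 ->
  captured_via x1 q d1 -> captured_via x2 q d2 -> d2 <= d1 -> x2 = x1.
Proof.
move=> hx2S hx2P [y [c [r [a1 [a1' [l [[hy hyP hc hpick] [[ha1 ha1' he1 hk1] [hw1 _ hr]]]]]]]]].
move=> [_ [_ [_ [a2 [a2' [_ [_ [[ha2 ha2' he2 hk2] [_ hw2 _]]]]]]]]] hd.
have he12 : e a1 a2' by apply: lab_exchange ha1 ha1' ha2 ha2' he1 he2 _; rewrite hk1 hk2.
have hball : in_ball e c r x2 by apply: in_ball_walk (walk_cat hw1 he12 hw2) _; lia.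
by case: (proj1 (hpick x2) (conj hx2S hball)) => // hx2y; rewrite -hx2y hx2P in hyP.
Qed.

Lemma captured_via_inj x1 x2 q d1 d2 : x1 \in S -> P x1 -> x2 \in S -> P x2 ->
  captured_via x1 q d1 -> captured_via x2 q d2 -> x1 = x2.
Proof.
move=> hx1S hx1P hx2S hx2P h1 h2; case: (leqP d2 d1) => hd.
  by apply/esym/(captured_via_unique hx2S hx2P h1 h2).
exact: captured_via_unique hx1S hx1P h2 h1 (ltnW hd).
Qed.

Lemma captured_exists_via x : P x -> captured x -> exists q d, captured_via x q d.
Proof.
move=> hx [y [c [r [hy hyP hc hpick]]]].
have [_ [p [hp hpx hpr]]] := proj2 (hpick x) (or_introl erefl).
have hPx : P (last c p) by rewrite hpx.
have [a [a' [l [d [[ha ha' he] [hw hw' hs]]]]]] := path_crossing hc hp hPx.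
exists (lab a a'), d, y, c, r, a, a', l; split => //; split => //; split => //.
- by rewrite -hpx.
- by rewrite hs.
Qed.

Lemma card_captured : #|[set x in S | P x && `[< captured x >]]| <= #|Q|.
Proof.
set Z := [set x in S | _].
have viaZ x : x \in Z -> exists q d, captured_via x q d.
  by rewrite inE => /and3P [_ hx /asboolP]; apply: captured_exists_via.
case: (set_0Vmem Z) => [->|[x0 /viaZ [q0 _]]]; first by rewrite cards0.
pose g x := odflt q0 [pick q | `[< exists d, captured_via x q d >]].
have gE x : x \in Z -> exists d, captured_via x (g x) d.
  move=> hx; rewrite /g; case: pickP => [q /asboolP //|none].
  by have [q hq] := viaZ _ hx; move: (none q); rewrite asboolT.
rewrite -(card_in_imset (f := g)); first exact: max_card.
move=> x1 x2 hx1 hx2 hg; have [d1 h1] := gE _ hx1; have [d2 h2] := gE _ hx2.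
rewrite -hg in h2; move: hx1 hx2; rewrite !inE => /and3P [hx1S hx1P _] /and3P [hx2S hx2P _].
exact: captured_via_inj h1 h2.
Qed.

Lemma uncaptured_exists : #|Q| < #|[set x in S | P x]| ->
  exists2 x, x \in S & P x /\ ~ captured x.
Proof.
move=> hQ.
have /subsetPn [x] : ~~ ([set x in S | P x] \subset [set x in S | P x && `[< captured x >]]).
  by apply/negP => /subset_leq_card; have := card_captured; lia.
rewrite !inE => /andP [hxS hxP]; rewrite hxS hxP /= => hnc.
by exists x => //; split => // /asboolP hc; rewrite hc in hnc.
Qed.

End Capture.

Section NLCDecomposition.
Variables (V : finType) (e : rel V) (N Q : finType) (par : N -> option N) (side : N -> bool).
Variables (leaf : V -> N) (alpha : V -> Q) (beta : N -> N -> Q -> Q) (R : N -> Q -> Q -> bool).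
Hypothesis e_sym : symmetric e.
Hypothesis root_uniq : forall a b, par a = None -> par b = None -> a = b.
Hypothesis up_root : forall v, exists n r, up par v n = Some r /\ par r = None.
Hypothesis binary : forall a b p, par a = Some p -> par b = Some p -> side a = side b -> a = b.
Hypothesis leaf_inj : injective leaf.
Hypothesis leaf_childless : forall x c, par c <> Some (leaf x).
Hypothesis nlc1 : forall u v n, 0 < n -> up par v n = Some u -> comp_up par beta v n = beta u v.
Hypothesis nlc2 : forall (x y : V) (u lx ry : N), x != y ->
  par lx = Some u -> side lx = false -> par ry = Some u -> side ry = true ->
  ancestor par lx (leaf x) -> ancestor par ry (leaf y) ->
  (e x y <-> R u (beta u (leaf x) (alpha x)) (beta u (leaf y) (alpha y))).

Lemma ancestor_leaf x v : ancestor par (leaf x) v -> v = leaf x.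
Proof.
case=> -[|n] h; first by case: h.
by have [c _ /leaf_childless] := up_succ h.
Qed.

Lemma beta_comp v u w n m q : 0 < n -> 0 < m ->
  up par v n = Some u -> up par u m = Some w -> beta w v q = beta w u (beta u v q).
Proof.
move=> hn hm hvu huw.
have hvw : up par v (n + m) = Some w by rewrite up_addn hvu.
have := comp_up_addn beta m q hvu.
by rewrite (nlc1 _ hvw) ?(nlc1 hn hvu) ?(nlc1 hm huw) // addn_gt0 hn.
Qed.

Definition inside u x := `[< ancestor par u (leaf x) >].
Definition label u x := beta u (leaf x) (alpha x).

Lemma edge_label_congr w cx cy x x' y :
  par cx = Some w -> par cy = Some w -> side cx != side cy ->
  ancestor par cx (leaf x) -> ancestor par cx (leaf x') -> ancestor par cy (leaf y) ->
  x != y -> x' != y -> label w x = label w x' -> e x y -> e x' y.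
Proof.
rewrite /label => hcx hcy hs hx hx' hy hxy hx'y hl.
case hsx: (side cx) hs; case hsy: (side cy) => // _.
  rewrite (e_sym x) (e_sym x'); rewrite eq_sym in hxy; rewrite eq_sym in hx'y.
  by move/(nlc2 hxy hcy hsy hcx hsx hy hx); rewrite hl => /(nlc2 hx'y hcy hsy hcx hsx hy hx').
by move/(nlc2 hxy hcx hsx hcy hsy hx hy); rewrite hl => /(nlc2 hx'y hcx hsx hcy hsy hx' hy).
Qed.

Lemma neighbour_transfer u x1 x2 z : (forall x, leaf x <> u) ->
  inside u x1 -> inside u x2 -> ~~ inside u z -> label u x1 = label u x2 -> e x1 z -> e x2 z.
Proof.
move=> hu /asboolP [n1 h1] /asboolP [n2 h2] /asboolP hz hl.
have hzu : ~ ancestor par (leaf z) u by move/ancestor_leaf => huz; apply: (hu z); rewrite huz.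
have [w [cu [cz [m [hcu hcuw hczw hcz hs]]]]] :=
  incomparable_children root_uniq up_root binary hz hzu.
have hw : up par u m.+1 = Some w by rewrite -addn1 up_addn hcu /= hcuw.
have pos x n : up par (leaf x) n = Some u -> 0 < n by case: n => // -[/hu].
have under_cu x n : up par (leaf x) n = Some u -> ancestor par cu (leaf x).
  by move=> h; exists (n + m); rewrite up_addn h.
have neq x n : up par (leaf x) n = Some u -> x != z.
  by move=> h; apply/eqP => hxz; apply: hz; exists n; rewrite -hxz.
apply: (edge_label_congr hcuw hczw hs (under_cu _ _ h1) (under_cu _ _ h2) hcz
  (neq _ _ h1) (neq _ _ h2)).
rewrite /label in hl *.
by rewrite (beta_comp _ (pos _ _ h1) _ h1 hw) // (beta_comp _ (pos _ _ h2) _ h2 hw) // hl.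
Qed.

Definition below (S : {set V}) u := [set x in S | inside u x].

Lemma heavy_node (S : {set V}) k : k < #|S| ->
  exists u, k < #|below S u| /\ forall c, par c = Some u -> #|below S c| <= k.
Proof.
move=> hk; have [x0 _] : exists x0, x0 \in S by apply/set0Pn; rewrite -card_gt0; lia.
have [_ [r [_ hr]]] := up_root (leaf x0).
have below_root : below S r = S.
  by apply/setP => x; rewrite inE andb_idr // => _; apply/asboolP/root_ancestor.
pose heavy n := [exists u, (k < #|below S u|) && (#|descendants par u| == n)].
have ex_heavy : exists n, heavy n.
  by exists #|descendants par r|; apply/existsP; exists r; rewrite below_root hk eqxx.
case: (ex_minnP ex_heavy) => n /existsP [u /andP [hu /eqP hn]] hmin.
exists u; split => // c hc; rewrite leqNgt; apply/negP => hc'.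
have : n <= #|descendants par c| by apply: hmin; apply/existsP; exists c; rewrite hc' eqxx.
by have := proper_card (descendants_child up_root hc); lia.
Qed.

Lemma card_below_leaf (S : {set V}) x : #|below S (leaf x)| <= 1.
Proof.
rewrite -(cards1 x); apply/subset_leq_card/subsetP => y.
by rewrite !inE => /andP [_ /asboolP /ancestor_leaf /leaf_inj ->].
Qed.

Lemma card_below_children (S : {set V}) u k : (forall x, leaf x <> u) ->
  (forall c, par c = Some u -> #|below S c| <= k) -> #|below S u| <= 2 * k.
Proof.
move=> hu hk.
pose half b := [set x in below S u |
  `[< exists c, [/\ par c = Some u, side c = b & ancestor par c (leaf x)] >]].
have card_half b : #|half b| <= k.
  case: (set_0Vmem (half b)) => [->|[x]]; first by rewrite cards0.
  rewrite inE => /andP [_ /asboolP [c [hc hsc _]]].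
  apply: leq_trans (hk c hc); apply/subset_leq_card/subsetP => y.
  rewrite !inE => /andP [/andP [hyS _] /asboolP [c' [hc' hsc' hy]]].
  by rewrite hyS; apply/asboolP; rewrite (binary hc hc' (etrans hsc (esym hsc'))).
have : below S u \subset half false :|: half true.
  apply/subsetP => x hx; have := hx; rewrite inE => /andP [_ /asboolP [[|j] hj]].
    by case: hj => hj; case: (hu x).
  have [c hcj hc] := up_succ hj.
  apply/setUP; case hs: (side c); [right | left];
    by rewrite inE hx; apply/asboolP; exists c; split => //; exists j.
move/subset_leq_card; rewrite cardsU.
by have := card_half false; have := card_half true; lia.
Qed.

Lemma shattered_split (S : {set V}) u : two_shattered e S -> (forall x, leaf x <> u) ->
  #|below S u| <= #|Q| \/ #|S :\: below S u| <= #|Q|.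
Proof.
move=> hS hu; case: (leqP #|below S u| #|Q|) => [|hin]; [by left | right].
rewrite leqNgt; apply/negP => hout.
have exchange_in a1 a1' a2 a2' : ~~ inside u a1 -> inside u a1' -> ~~ inside u a2 ->
    inside u a2' -> e a1 a1' -> e a2 a2' -> label u a1' = label u a2' -> e a1 a2'.
  move=> h1 h1' _ h2' he1 _ hl; rewrite e_sym in he1; rewrite e_sym.
  exact: neighbour_transfer hu h1' h2' h1 hl he1.
have exchange_out a1 a1' a2 a2' : ~~ (predC (inside u)) a1 -> (predC (inside u)) a1' ->
    ~~ (predC (inside u)) a2 -> (predC (inside u)) a2' ->
    e a1 a1' -> e a2 a2' -> label u a1 = label u a2 -> e a1 a2'.
  move=> /negbNE h1 _ /negbNE h2 h2' _ he2 hl.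
  exact: neighbour_transfer hu h2 h1 h2' (esym hl) he2.
have [x hxS [hx hxfree]] :=
  uncaptured_exists (S := S) (P := inside u) (lab := fun _ a' => label u a') exchange_in hin.
have [|y hyS [hy hyfree]] :=
  uncaptured_exists (S := S) (P := predC (inside u)) (lab := fun a _ => label u a) exchange_out.
  suff -> : [set y in S | predC (inside u) y] = S :\: below S u by [].
  by apply/setP => y; rewrite !inE; case: (y \in S); rewrite /= ?andbT.
have hxy : x != y by apply: contraNneq hy => <-.
have [c [r hpick]] := hS x y hxS hyS hxy.
case hc: (inside u c).
  by apply: hyfree; exists x, c, r; split; rewrite /= ?hx ?hc // => v; rewrite hpick or_comm.
by apply: hxfree; exists y, c, r; split; rewrite ?hc.
Qed.

Lemma card_two_shattered (S : {set V}) k :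
  0 < k -> #|Q| <= k -> two_shattered e S -> #|S| <= 3 * k.
Proof.
move=> hk hQ hS; rewrite leqNgt; apply/negP => big.
have [|u [hu hchildren]] := heavy_node (k := k) (S := S); first lia.
have hleaf x : leaf x <> u by move=> hxu; have := card_below_leaf S x; rewrite hxu; lia.
have hsub : below S u \subset S by apply/subsetP => x; rewrite inE => /andP [].
have := card_below_children hleaf hchildren; have := cardsDS hsub; have := subset_leq_card hsub.
by case: (shattered_split hS hleaf); lia.
Qed.

End NLCDecomposition.

Theorem propositionA1 (t : nat) (V : finType) (e : rel V) :
  0 < t -> symmetric e -> irreflexive e -> nlc_width_le e t ->
  vc2dim_balls_le e (6 * t + 2).
Proof.
move=> ht e_sym _ [N [Q [par [side [leaf [alpha [beta [R [hQ hdec]]]]]]]]] S hS.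
have [root_uniq [up_root [binary [leaf_inj [leaves [_ [nlc1 nlc2]]]]]]] := hdec.
have leaf_childless x c : par c <> Some (leaf x) by apply/(proj2 (leaves _)); exists x.
have := card_two_shattered e_sym root_uniq up_root binary leaf_inj leaf_childless nlc1 nlc2
  ht hQ hS.
lia.
Qed.
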